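(* Let $x,y$ be vectors in a real Hilbert space and let $p\ge1$ be an integer. If $p$ is odd or $\langle x,y\rangle\ge0$, then $$\langle x,x\rangle^p-2\langle x,y\rangle^p+\langle y,y\rangle^p\ge\frac{1}{2^{2(p-1)}}\|x-y\|^{2p}.$$ *)

From mathcomp Require Import all_boot all_order all_algebra.
From mathcomp Require Import all_classical all_reals all_analysis.
Import Order.TTheory GRing.Theory Num.Theory.
Import numFieldNormedType.Exports.
Local Open Scope ring_scope.

(* A real Hilbert space is a complete normed real vector space V whose norm
   is induced by an inner product.  [is_inner_product ip] says that
   ip : V -> V -> R is a symmetric, bilinear (linear in the first argument,
   hence in both by symmetry), positive definite form and that the norm of
   V is the induced one: `|x| = sqrt <x,x>.  Completeness is carried by the
   structure completeNormedModType. *)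
Definition is_inner_product (R : realType) (V : normedModType R)
    (ip : V -> V -> R) : Prop :=
  [/\ (forall x y : V, ip x y = ip y x),
      (forall (a : R) (x y z : V), ip (a *: x + y) z = a * ip x z + ip y z),
      (forall x : V, 0 <= ip x x),
      (forall x : V, ip x x = 0 -> x = 0)
    & (forall x : V, `|x| = Num.sqrt (ip x x))].

From mathcomp Require Import all_boot all_order all_algebra.
From mathcomp Require Import all_classical all_reals all_analysis.
From mathcomp Require Import lra.
Import Order.TTheory GRing.Theory Num.Theory.
Import numFieldNormedType.Exports.
Local Open Scope ring_scope.

(* With a = <x,x>, b = <y,y>, c = <x,y> and d = a - 2c + b = |x - y|^2, only
   two facts about u, v >= 0 and p = n + 1 are needed: superadditivity
   u^p + v^p <= (u + v)^p, and the power mean bound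
   (u + v)^p <= 2^n (u^p + v^p).  If c >= 0, superadditivity applied to
   2c + d = a + b followed by the power mean bound gives
   d^p <= 2^n (a^p - 2c^p + b^p).  If c < 0 and p is odd, the power mean bound
   applied to d = (a + b) + (-2c), where (-2c)^p = -2^p c^p, and then once more
   to (a + b)^p gives the constant 4^n = 2^(2(p-1)). *)

Section PowerInequalities.
Context {R : realDomainType}.
Implicit Types (u v : R) (n : nat).

Lemma subr_mul_subX_ge0 n u v : 0 <= u -> 0 <= v ->
  0 <= (u - v) * (u ^+ n - v ^+ n).
Proof.
move=> u0 v0; have [uv|/ltW vu] := lerP u v.
  by apply: mulr_le0; rewrite subr_le0 //; apply: lerXn2r.
by apply: mulr_ge0; rewrite subr_ge0 //; apply: lerXn2r.
Qed.

Lemma addXn_le_exprD n u v : 0 <= u -> 0 <= v ->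
  u ^+ n.+1 + v ^+ n.+1 <= (u + v) ^+ n.+1.
Proof.
move=> u0 v0; elim: n => [|n IH]; first by rewrite !expr1.
have uX0 : 0 <= u ^+ n.+1 := exprn_ge0 _ u0.
have vX0 : 0 <= v ^+ n.+1 := exprn_ge0 _ v0.
rewrite [u ^+ _]exprS [v ^+ _]exprS [(u + v) ^+ _]exprS.
apply: le_trans (ler_wpM2l (addr_ge0 u0 v0) IH); nra.
Qed.

Lemma exprD_le_addXn n u v : 0 <= u -> 0 <= v ->
  (u + v) ^+ n.+1 <= 2 ^+ n * (u ^+ n.+1 + v ^+ n.+1).
Proof.
move=> u0 v0; elim: n => [|n IH]; first by rewrite !expr1 mul1r.
have chebyshev : (u + v) * (u ^+ n.+1 + v ^+ n.+1) <= 2 * (u ^+ n.+2 + v ^+ n.+2).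
  have := subr_mul_subX_ge0 n.+1 _ _ u0 v0; rewrite !exprS; nra.
rewrite exprS (le_trans (ler_wpM2l (addr_ge0 u0 v0) IH)) //.
by rewrite mulrCA [2 ^+ n.+1]exprSr -mulrA ler_wpM2l ?exprn_ge0.
Qed.

End PowerInequalities.

Section GramPowerInequality.
Variables (R : realDomainType) (a b c : R) (n : nat).
Hypotheses (a0 : 0 <= a) (b0 : 0 <= b).

Lemma gram_pow_ineq_ge0 : 0 <= c -> 0 <= a - 2 * c + b ->
  (a - 2 * c + b) ^+ n.+1 <= 2 ^+ n * (a ^+ n.+1 - 2 * c ^+ n.+1 + b ^+ n.+1).
Proof.
move=> c0 d0; have c20 : 0 <= 2 * c by rewrite mulr_ge0.
have := addXn_le_exprD n _ _ c20 d0.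
rewrite [2 * c + _]addrC addrAC subrK exprMn exprS.
have := exprD_le_addXn n _ _ a0 b0.
nra.
Qed.

Lemma gram_pow_ineq_odd : odd n.+1 -> c <= 0 ->
  (a - 2 * c + b) ^+ n.+1
    <= 2 ^+ (2 * n) * (a ^+ n.+1 - 2 * c ^+ n.+1 + b ^+ n.+1).
Proof.
move=> odd_n c0; have ab0 : 0 <= a + b by rewrite addr_ge0.
have c20 : 0 <= - (2 * c) by rewrite oppr_ge0 mulr_ge0_le0.
have := exprD_le_addXn n _ _ ab0 c20.
rewrite addrAC exprNn -signr_odd odd_n expr1 exprMn [2 ^+ n.+1]exprS.
have := ler_wpM2l (exprn_ge0 n (ler0n R 2)) (exprD_le_addXn n _ _ a0 b0).
rewrite mulnC exprM expr2.
nra.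
Qed.

Lemma gram_pow_ineq : 0 <= a - 2 * c + b -> odd n.+1 \/ 0 <= c ->
  (a - 2 * c + b) ^+ n.+1
    <= 2 ^+ (2 * n) * (a ^+ n.+1 - 2 * c ^+ n.+1 + b ^+ n.+1).
Proof.
move=> d0 odd_or_c0; have [c0 | c_lt0] := lerP 0 c; last first.
  case: odd_or_c0 => [odd_n | c0]; last lra.
  exact: gram_pow_ineq_odd odd_n (ltW c_lt0).
have := gram_pow_ineq_ge0 c0 d0.
set X := a ^+ n.+1 - _ + _ => le_dX.
have X0 : 0 <= X.
  rewrite -(pmulr_rge0 _ (exprn_gt0 n (ltr0n R 2))).
  exact: le_trans (exprn_ge0 _ d0) le_dX.
apply: le_trans le_dX _; rewrite ler_wpM2r // ler_eXn2l ?ltr1n //.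
by rewrite leq_pmull.
Qed.

End GramPowerInequality.

Section InnerProduct.
Context {R : realType} {V : normedModType R} {ip : V -> V -> R}.
Hypothesis hip : @is_inner_product R V ip.

Lemma ip_sym x y : ip x y = ip y x.
Proof. by case: hip. Qed.

Lemma ip_ge0 x : 0 <= ip x x.
Proof. by case: hip. Qed.

Lemma ipBl x y z : ip (x - y) z = ip x z - ip y z.
Proof.
case: hip => _ ip_linear _ _ _.
by rewrite addrC -scaleN1r ip_linear mulN1r addrC.
Qed.

Lemma sqr_normB x y : `|x - y| ^+ 2 = ip x x - 2 * ip x y + ip y y.
Proof.
case: hip => _ _ _ _ ->; rewrite sqr_sqrtr ?ip_ge0 //.
rewrite ipBl !(ip_sym _ (x - y)) !ipBl (ip_sym y x).
lra.
Qed.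

End InnerProduct.

Theorem lemma4 (R : realType) (V : completeNormedModType R)
  (ip : V -> V -> R) (hip : @is_inner_product R V ip)
  (x y : V) (p : nat) (hp : (1 <= p)%N)
  (hcase : odd p \/ 0 <= ip x y) :
  ip x x ^+ p - 2 * ip x y ^+ p + ip y y ^+ p
    >= `|x - y| ^+ (2 * p) / 2 ^+ (2 * (p - 1)).
Proof.
case: p hp hcase => [//|n] _ hcase.
rewrite exprM (sqr_normB hip) subn1 /= ler_pdivrMr ?exprn_gt0 // [leRHS]mulrC.
apply: gram_pow_ineq => //.
- exact: ip_ge0 hip x.
- exact: ip_ge0 hip y.
- by rewrite -(sqr_normB hip) sqr_ge0.
Qed.
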